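(* For every cache size $k\ge 1$, there is a deterministic online paging algorithm for the discard-predictions setup that is $(1,k-1,1)$-competitive. That is, there is a constant $b$ (possibly depending on $k$) such that for every request sequence $I$ and every prediction vector $p$, the number of page faults of the algorithm satisfies $\mathrm{ALG}(I,p)\le \mathrm{OPT}(I)+(k-1)\,\eta_0(p,p^* )+\eta_1(p,p^* )+b$.
   Context: Paging: there is a universe $U$ of pages and a cache holding at most $k$ pages, initially empty. Requests $r_1,\dots,r_n\in U$ arrive online. If the requested page is not in the cache (a page fault), it must be loaded into the cache, evicting some cached page if the cache already holds $k$ pages. The cost of an algorithm is its number of page faults. An online algorithm decides evictions without knowing future requests; $\mathrm{OPT}(I)$ is the minimum cost of an offline algorithm on request sequence $I$. Along with each request $r_i$ the online algorithm receives a prediction bit $p_i\in\{0,1\}$ (which may be arbitrary). Given the ground truth vector $p^*\in\{0,1\}^n$, define for $h\in\{0,1\}$: $\eta_h(p,p^* )=|\{i\in[n] : p_i=h,\ p_i^*=1-h\}|$. An algorithm is $(\alpha,\beta,\gamma)$-competitive if there is a constant $b$ (possibly depending on $k$) such that for every instance $I$ and all predictions $p$, $\mathrm{ALG}(I,p)\le \alpha\,\mathrm{OPT}(I)+\beta\,\eta_0(p,p^* )+\gamma\,\eta_1(p,p^* )+b$ (for randomized algorithms, $\mathrm{ALG}(I,p)$ is the expected cost). Discard-predictions setup: fix the optimal offline algorithm LFD, which on a fault with full cache evicts a cached page that is never requested again if one exists, and otherwise the cached page whose next request is furthest in the future (ties broken by a fixed rule). The ground truth is $p_i^*=0$ if LFD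 keeps page $r_i$ in its cache until the next request to $r_i$ (or until the end of the sequence if there is no further request), and $p_i^*=1$ if LFD evicts $r_i$ before it is requested again. *)

From mathcomp Require Import all_boot.
Set Implicit Arguments. Unset Strict Implicit. Unset Printing Implicit Defensive.

Section Paging.
Variable U : eqType.

(* The cache is a
   duplicate-free sequence of pages.  On a hit nothing changes; on a fault
   with a non-full cache the page is simply loaded; on a fault with a full
   cache the proposed victim is evicted (if the proposal is not a cached page,
   the first cached page is evicted instead, so every proposal function yields
   a legal paging algorithm). *)
Definition step (k : nat) (cache : seq U) (r : U) (victim : U) : seq U :=
  if r \in cache then cache
  else if size cache < k then rcons cache r
  else let v := if victim \in cache then victim else head r cache in
       rcons (rem v cache) r.

(* An online algorithm proposes a victim from the current cache and the history
   of (request, prediction) pairs seen so far, the current one included. *)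
Definition online_alg := seq U -> seq (U * bool) -> U.

Fixpoint on_cost (k : nat) (alg : online_alg) (cache : seq U)
    (hist : seq (U * bool)) (rest : seq (U * bool)) : nat :=
  match rest with
  | [::] => 0
  | (r, b) :: rest' =>
      let h := rcons hist (r, b) in
      (r \notin cache) + on_cost k alg (step k cache r (alg cache h)) h rest'
  end.

Definition ALG (k : nat) (alg : online_alg) (I : seq U) (p : seq bool) : nat :=
  on_cost k alg [::] [::] (zip I p).

(* An offline algorithm (for a fixed, fully known sequence I) proposes a victim
   as a function of the time step and the current cache. *)
Definition offline_alg := nat -> seq U -> U.

Fixpoint off_cost (k : nat) (ev : offline_alg) (t : nat) (cache : seq U)
    (rest : seq U) : nat :=
  match rest with
  | [::] => 0
  | r :: rest' => (r \notin cache) + off_cost k ev t.+1 (step k cache r (ev t cache)) rest'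
  end.

Definition offline_cost k ev (I : seq U) := off_cost k ev 0 [::] I.

Definition is_OPT (k : nat) (I : seq U) (opt : nat) : Prop :=
  (exists ev : offline_alg, offline_cost k ev I = opt) /\
  (forall ev : offline_alg, opt <= offline_cost k ev I).

(* Cache contents after each step: the i-th entry is the cache after
   serving request i. *)
Fixpoint trace (k : nat) (ev : offline_alg) (t : nat) (cache : seq U)
    (rest : seq U) : seq (seq U) :=
  match rest with
  | [::] => [::]
  | r :: rest' => let c' := step k cache r (ev t cache) in
                  c' :: trace k ev t.+1 c' rest'
  end.

Definition req_after (I : seq U) (t : nat) (q : U) : bool := q \in drop t.+1 I.
(* index of the next request to q after time t (size I if none) *)
Definition next_req (I : seq U) (t : nat) (q : U) : nat :=
  t.+1 + index q (drop t.+1 I).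

Definition is_LFD_rule (lfd : seq U -> nat -> seq U -> U) : Prop :=
  forall (I : seq U) (t : nat) (c : seq U), c != [::] ->
    lfd I t c \in c /\
    (if has (fun q => ~~ req_after I t q) c
     then is_true (~~ req_after I t (lfd I t c))
     else forall q, q \in c -> next_req I t q <= next_req I t (lfd I t c)).

(* Ground truth p*_i (0-indexed) for request r = r_i: false (=0) iff LFD keeps
   r in its cache from step i until just before the next request to r (or
   until the end of the sequence), true (=1) iff LFD evicts it in between. *)
Definition pstar (k : nat) (lfd : seq U -> nat -> seq U -> U) (I : seq U)
    (i : nat) (r : U) : bool :=
  let tr := trace k (lfd I) 0 [::] I in
  ~~ all (fun j => r \in nth [::] tr j) (iota i (next_req I i r - i)).

Definition eta (k : nat) (lfd : seq U -> nat -> seq U -> U) (h : bool)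
    (I : seq U) (p : seq bool) : nat :=
  count (fun x : nat * U * bool =>
           let: (i, r, b) := x in (b == h) && (pstar k lfd I i r == ~~ h))
        (zip (zip (iota 0 (size I)) I) p).
End Paging.

From mathcomp Require Import all_boot zify.
Set Implicit Arguments. Unset Strict Implicit. Unset Printing Implicit Defensive.

(* On a fault with a full cache the algorithm evicts a cached page whose latest
   prediction is 1 if there is one, and otherwise the page that entered the
   cache first.  It is compared with LFD, which is optimal by Belady's exchange
   argument.  A fault of the algorithm on page [r] at time [j] where LFD hits is
   blamed on the previous request [i] to [r]: LFD keeps [r] from [i] to [j], so
   [p*_i = 0].  If [p_i = 1] this is an eta_1 error, charged once.  If [p_i = 0],
   the algorithm evicted [r] at some time [t] in between while every cached
   page was predicted 0, so [r] was the oldest cached page; both caches being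
   full, some page [e] behind [r] in the algorithm's cache is missing from LFD's
   cache after [t], and the last request [s] to [e] has [p_s = 0] but
   [p*_s = 1].  The faults charged to [s] concern distinct pages in front of [e]
   in the algorithm's cache from [s + 1] on, hence there are at most [k - 1]. *)

Section SeqLemmas.
Variable T : eqType.
Implicit Types (x y z : T) (s : seq T).

Lemma index_cons x y s : index x (y :: s) = if y == x then 0 else (index x s).+1.
Proof. by []. Qed.

Lemma index_rcons_mem x z s : x \in s -> index x (rcons s z) = index x s.
Proof. by move=> xs; rewrite -cats1 index_cat xs. Qed.

Lemma index_rcons_notin z s : z \notin s -> index z (rcons s z) = size s.
Proof. by move=> zs; rewrite -cats1 index_cat (negbTE zs) /= eqxx addn0. Qed.

Lemma index_rem_lt v x y s : uniq s -> x \in rem v s -> y \in rem v s ->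
  index x (rem v s) < index y (rem v s) -> index x s < index y s.
Proof.
elim: s => //= c s IH /andP[cs us].
case: (eqVneq c v) => [_ xs ys|_] /=.
  have /negPf-> : c != x by apply: contraNneq cs => ->.
  by have /negPf-> : c != y by apply: contraNneq cs => ->.
rewrite !in_cons eq_sym [y == c]eq_sym.
case: (eqVneq c y) => [_ _ _|_]; first by rewrite ltn0.
by case: (eqVneq c x) => //= _ xr yr; rewrite ltnS; apply: IH.
Qed.

Lemma leq_index x0 a x s : a <= size s ->
  (forall m, m < a -> nth x0 s m != x) -> a <= index x s.
Proof.
move=> a_le notx; rewrite leqNgt; apply/negP => lt_ia.
have xs : x \in s by rewrite -index_mem (leq_trans lt_ia).
by have := notx _ lt_ia; rewrite nth_index // eqxx.
Qed.

Lemma size_remS x s : x \in s -> (size (rem x s)).+1 = size s.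
Proof. by move=> xs; rewrite (perm_size (perm_to_rem xs)). Qed.

Lemma perm_rem x s1 s2 : perm_eq s1 s2 -> perm_eq (rem x s1) (rem x s2).
Proof.
move=> eq12; have [xs1|xs1] := boolP (x \in s1); last first.
  by rewrite !rem_id // -(perm_mem eq12).
have xs2 : x \in s2 by rewrite -(perm_mem eq12).
rewrite -(perm_cons x); apply: perm_trans (perm_to_rem xs2).
by rewrite perm_sym; apply: perm_trans (perm_to_rem xs1); rewrite perm_sym.
Qed.

Lemma perm_rcons2 z s1 s2 : perm_eq s1 s2 -> perm_eq (rcons s1 z) (rcons s2 z).
Proof. by move=> eq12; rewrite perm_rcons perm_sym perm_rcons perm_cons perm_sym. Qed.

Lemma perm_cons_rcons_rem y z s : y \in s -> perm_eq (y :: rcons (rem y s) z) (z :: s).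
Proof.
move=> ys; apply: (@perm_trans _ (y :: z :: rem y s)).
  by rewrite perm_cons perm_rcons.
by rewrite (perm_catCA [:: y] [:: z]) perm_cons perm_sym perm_to_rem.
Qed.

Lemma rem_remC x y s : uniq s -> rem x (rem y s) = rem y (rem x s).
Proof.
move=> us; rewrite (rem_filter x (rem_uniq y us)) (rem_filter y (rem_uniq x us)).
rewrite (rem_filter x us) (rem_filter y us) -!filter_predI.
by apply: eq_filter => z /=; rewrite andbC.
Qed.

Lemma perm_rcons_rem x y z s : x \in rem y s ->
  perm_eq (rcons (rem y s) z) (x :: rcons (rem x (rem y s)) z).
Proof. by move=> xs; exact: (perm_rcons2 z (perm_to_rem xs)). Qed.

Lemma uniq_rcons_rem x y z s : uniq (x :: s) -> z \notin x :: s -> uniq (x :: rcons (rem y s) z).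
Proof.
rewrite /= in_cons negb_or => /andP[xs us] /andP[zx zs].
rewrite mem_rcons in_cons negb_or eq_sym zx rcons_uniq rem_uniq // andbT.
by rewrite (contra (@mem_rem _ y s x) xs) (contra (@mem_rem _ y s z) zs).
Qed.

End SeqLemmas.

Lemma count_le_size_rel (T1 T2 : eqType) (P : pred T1) (R : T1 -> T2 -> Prop)
    (s : seq T1) (t : seq T2) : uniq s ->
  (forall x, x \in s -> P x -> exists2 y, y \in t & R x y) ->
  (forall x1 x2 y, x1 \in s -> x2 \in s -> P x1 -> P x2 -> R x1 y -> R x2 y -> x1 = x2) ->
  count P s <= size t.
Proof.
elim: s t => [|x s IH] t //= /andP[xs us] img inj.
have sub_s : {subset s <= x :: s} by move=> z zs; rewrite in_cons zs orbT.
have inj_s x1 x2 y : x1 \in s -> x2 \in s -> P x1 -> P x2 -> R x1 y -> R x2 y -> x1 = x2.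
  by move=> /sub_s x1s /sub_s x2s; apply: inj.
case Px: (P x) => /=; last by apply: IH => // z /sub_s; apply: img.
have [y yt Rxy] := img x (mem_head _ _) Px.
rewrite (perm_size (perm_to_rem yt)) ltnS; apply: IH => // z zs Pz.
have [y' y't Rzy'] := img z (sub_s _ zs) Pz.
exists y' => //; apply: rem_mem y't; apply: contraNneq xs => eq_y'.
by rewrite -(inj z x y) ?mem_head ?sub_s // -eq_y'.
Qed.

Lemma count_le_sum3 (T : eqType) (a b c d : pred T) (s : seq T) :
  {in s, forall x, a x <= b x + c x + d x} ->
  count a s <= count b s + count c s + count d s.
Proof.
elim: s => //= x s IH abcd; have := abcd x (mem_head x s).
have := IH (fun y ys => abcd y (mem_behead (s := x :: s) ys)); lia.
Qed.

Lemma exists_mem_notin (T : eqType) (C L : seq T) x : uniq C -> x \notin C -> x \in L ->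
  size L <= size C -> exists2 e, e \in C & e \notin L.
Proof.
move=> uC xC xL sLC; have [/allP CL|/allPn[e eC eL]] := boolP (all (mem L) C); last by exists e.
have : size (x :: C) <= size L.
  by apply: uniq_leq_size => [|z]; rewrite /= ?xC // in_cons => /orP[/eqP-> //|/CL].
by rewrite /= ltnNge sLC.
Qed.

Lemma exists_boundary (P : pred nat) a b : a <= b -> P a -> ~~ P b ->
  exists t, [/\ a <= t < b, P t & ~~ P t.+1].
Proof.
elim: b => [|b IH] le_ab Pa Pb.
  by move: le_ab; rewrite leqn0 => /eqP a0; rewrite -a0 Pa in Pb.
case: (eqVneq a b.+1) => [eq_ab|ne_ab]; first by rewrite -eq_ab Pa in Pb.
have le_ab' : a <= b by lia.
case Pb': (P b); first by exists b; rewrite le_ab' leqnn.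
have [t [/andP[le_at lt_tb] Pt Pt1]] := IH le_ab' Pa (negbT Pb').
by exists t; rewrite le_at ltnW.
Qed.

Section Step.
Variables (U : eqType) (k : nat).
Implicit Types (C : seq U) (r v x y : U).

Lemma mem_step C r v x : x \in step k C r v -> (x \in C) || (x == r).
Proof.
rewrite /step; case: ifP => _; first by move->.
by case: ifP => _; rewrite mem_rcons in_cons => /orP[->|xD]; rewrite ?orbT ?xD ?(mem_rem xD).
Qed.

Lemma mem_step_req C r v : r \in step k C r v.
Proof. by rewrite /step; case: ifP => // _; case: ifP => _; rewrite mem_rcons mem_head. Qed.

Lemma victim_mem C r v : C != [::] -> (if v \in C then v else head r C) \in C.
Proof. by case: ifP => // _; case: C => // c C _; apply: mem_head. Qed.

Lemma step_uniq_size C r v : 0 < k -> uniq C -> size C <= k ->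
  uniq (step k C r v) && (size (step k C r v) <= k).
Proof.
move=> k_gt0 uC sC; rewrite /step; case: ifP => rC; first by rewrite uC sC.
case: ifP => sk; first by rewrite rcons_uniq rC uC size_rcons.
have /victim_mem wC : C != [::] by apply: contraFneq sk => ->.
rewrite rcons_uniq rem_uniq // size_rcons size_remS // sC !andbT.
by apply: contra (negbT rC); apply: mem_rem.
Qed.

Lemma step_evicted C r v x : x \in C -> x \notin step k C r v ->
  [/\ r \notin C, k <= size C & x = if v \in C then v else head r C].
Proof.
move=> xC; rewrite /step; case: ifP => rC; first by rewrite xC.
case: ifP => sk; first by rewrite mem_rcons in_cons xC orbT.
rewrite mem_rcons in_cons negb_or => /andP[_ xw]; split; first by [].
  by rewrite leqNgt sk.
by apply/eqP; apply: contraNT xw => ne; apply: rem_mem.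
Qed.

(* Pages enter the cache only at its end, so their relative order never changes. *)
Lemma step_precedes C r v x y : uniq C -> y \in C ->
  x \in step k C r v -> y \in step k C r v ->
  index x (step k C r v) < index y (step k C r v) -> x \in C /\ index x C < index y C.
Proof.
move=> uC yC; rewrite /step; case: ifP => rC; first by [].
have yr : y != r by apply: contraFneq rC => <-.
have rcons_precedes D : uniq D -> {subset D <= C} -> x \in rcons D r -> y \in rcons D r ->
    index x (rcons D r) < index y (rcons D r) -> x \in D /\ index x D < index y D.
  move=> uD DC; rewrite !mem_rcons !in_cons (negPf yr) /= => xD yD.
  have rD : r \notin D by apply: contraFN rC; apply: DC.
  case: (eqVneq x r) xD => [-> _|_ xD]; last by rewrite !index_rcons_mem.
  by rewrite index_rcons_notin // index_rcons_mem // ltnNge index_size.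
case: ifP => _ xs ys lt_xy; first exact: rcons_precedes.
set w := if v \in C then v else head r C in xs ys lt_xy *.
have [xD lt_xyD] := rcons_precedes _ (rem_uniq _ uC) (mem_rem (s:=C)) xs ys lt_xy.
have yD : y \in rem w C by move: ys; rewrite mem_rcons in_cons (negPf yr).
by split; [exact: mem_rem xD | exact: index_rem_lt uC xD yD lt_xyD].
Qed.

End Step.

Section Belady.
Variables (U : eqType) (k : nat).
Hypothesis k_gt0 : 0 < k.
Implicit Types (lfd : seq U -> nat -> seq U -> U) (I C : seq U).

Inductive serves : seq U -> seq U -> nat -> Prop :=
| serves_nil C : serves C [::] 0
| serves_hit C r s n : r \in C -> serves C s n -> serves C (r :: s) n
| serves_load C r s n : r \notin C -> size C < k ->
    serves (rcons C r) s n -> serves C (r :: s) n.+1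
| serves_evict C r s n y : r \notin C -> k <= size C -> y \in C ->
    serves (rcons (rem y C) r) s n -> serves C (r :: s) n.+1.

Lemma serves_perm C C' s n : perm_eq C C' -> serves C s n -> serves C' s n.
Proof.
move=> CC' run; elim: run C' CC' => {C s n} [C|C r s n rC _ IH|C r s n rC sC _ IH
  |C r s n y rC sC yC _ IH] C' CC'.
- exact: serves_nil.
- by apply: serves_hit; [rewrite -(perm_mem CC') | exact: IH].
- apply: serves_load; rewrite -?(perm_mem CC') -?(perm_size CC') //.
  by apply: IH; apply: perm_rcons2.
- apply: (@serves_evict _ _ _ _ y); rewrite -?(perm_mem CC') -?(perm_size CC') //.
  by apply: IH; apply: perm_rcons2; apply: perm_rem.
Qed.

Lemma serves_consE C r s n : serves C (r :: s) n ->
  (r \in C /\ serves C s n) \/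
  (exists n', [/\ n = n'.+1, r \notin C & size C < k /\ serves (rcons C r) s n'
       \/ k <= size C /\ exists2 y, y \in C & serves (rcons (rem y C) r) s n']).
Proof.
move=> run; inversion run; subst; first by left.
  by right; exists n0; split=> //; left.
by right; exists n0; split=> //; right; split=> //; exists y.
Qed.

Lemma serves_evict_head a T r s n : r \notin a :: T -> k <= (size T).+1 ->
  serves (rcons T r) s n -> serves (a :: T) (r :: s) n.+1.
Proof. by move=> raT full run; apply: (@serves_evict _ _ _ _ a); rewrite ?mem_head //= eqxx. Qed.

Lemma serves_evict_behind a T y r s n : r \notin a :: T -> k <= (size T).+1 ->
  y \in T -> y != a -> serves (a :: rcons (rem y T) r) s n -> serves (a :: T) (r :: s) n.+1.
Proof.
move=> raT full yT ya run; apply: (@serves_evict _ _ _ _ y); rewrite ?in_cons ?yT ?orbT //=.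
by rewrite eq_sym (negPf ya).
Qed.

Lemma serves_exchange s a b T n : uniq (b :: T) -> a \notin T -> k <= (size T).+1 ->
  serves (b :: T) s n ->
  exists2 m, m <= n + (index b s < index a s) & serves (a :: T) s m.
Proof.
elim: s a b T n => [|r s IH] a b T n uT aT full run.
  by exists 0; last exact: serves_nil.
case: (eqVneq a b) => [->|ab]; first by exists n; rewrite ?leq_addr.
have [bT _] := andP uT.
case/serves_consE: run => [[rbT run]|[n' [-> rbT [[]|[_ [y ybT run]]]]]].
- rewrite in_cons in rbT; case: (eqVneq r b) rbT => [-> _|rb /= rT].
    exists n.+1; first by rewrite index_head !index_cons eq_sym (negPf ab) addn1.
    apply: serves_evict_head; rewrite ?in_cons ?negb_or 1?eq_sym ?ab //.
    by apply: serves_perm run; rewrite perm_sym perm_rcons.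
  have ar : a != r by apply: contraNneq aT => ->.
  have [m le_m run'] := IH a b T n uT aT full run.
  exists m; first by rewrite (negPf rb) eq_sym (negPf ar).
  by apply: serves_hit; rewrite // in_cons rT orbT.
- by rewrite ltnNge full.
have [rb rT] : r != b /\ r \notin T by move: rbT; rewrite in_cons negb_or => /andP.
have raT : r != a -> r \notin a :: T by move=> ra; rewrite in_cons negb_or ra.
case: (eqVneq y b) ybT run => [-> _|yb ybT].
  rewrite /= eqxx => run; case: (eqVneq r a) run => [->|ra] run.
    exists n'; first by rewrite ltn0 addn0.
    by apply: serves_hit; [exact: mem_head | apply: serves_perm run; rewrite perm_rcons].
  by exists n'.+1; [exact: leq_addr | exact: serves_evict_head (raT ra) full run].
have yT : y \in T by rewrite in_cons (negPf yb) in ybT.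
have ya : y != a by apply: contraNneq aT => <-.
rewrite /= eq_sym (negPf yb) => run.
have uT' := uniq_rcons_rem y uT rbT.
have full' : k <= (size (rcons (rem y T) r)).+1 by rewrite size_rcons size_remS.
case: (eqVneq r a) => [eq_ra|ra].
  have yT' : y \notin rcons (rem y T) r.
    by rewrite mem_rcons in_cons eq_ra (negPf ya) mem_rem_uniqF //; case/andP: uT.
  have [m le_m run'] := IH y b _ n' uT' yT' full' run.
  exists m; first by rewrite ltn0 addn0 (leq_trans le_m) // -[n'.+1]addn1 leq_add2l leq_b1.
  rewrite -eq_ra; apply: serves_hit (mem_head _ _) _.
  by apply: serves_perm run'; apply: perm_cons_rcons_rem.
have aT' : a \notin rcons (rem y T) r.
  by rewrite mem_rcons in_cons eq_sym (negPf ra) (contra (@mem_rem _ y T a) aT).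
have [m le_m run'] := IH a b _ n' uT' aT' full' run.
exists m.+1; first by rewrite (negPf rb) ltnS addSn ltnS.
exact: serves_evict_behind (raT ra) full yT ya run'.
Qed.

Lemma serves_evict_later C r y z s n : uniq C -> r \notin C -> k <= size C ->
  y \in C -> z \in C -> index y s <= index z s ->
  serves (rcons (rem y C) r) s n -> exists2 m, m <= n & serves (rcons (rem z C) r) s m.
Proof.
move=> uC rC full yC zC le_yz run; case: (eqVneq y z) => [<-|yz]; first by exists n.
set T := rcons (rem y (rem z C)) r.
have runT : perm_eq (rcons (rem y C) r) (z :: T).
  by rewrite /T -rem_remC //; apply: perm_rcons_rem; rewrite rem_mem // eq_sym.
have lfdT : perm_eq (rcons (rem z C) r) (y :: T) by apply: perm_rcons_rem; apply: rem_mem.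
have uniq_rcons_rem x : uniq (rcons (rem x C) r).
  by rewrite rcons_uniq rem_uniq // andbT; apply: contra rC; apply: mem_rem.
have uzT : uniq (z :: T) by rewrite -(perm_uniq runT).
have yT : y \notin T by have := uniq_rcons_rem z; rewrite (perm_uniq lfdT) => /andP[].
have fullT : k <= (size T).+1.
  by rewrite -[(size T).+1]/(size (z :: T)) -(perm_size runT) size_rcons size_remS.
have [m le_m run'] := serves_exchange uzT yT fullT (serves_perm runT run).
by exists m; [rewrite ltnNge le_yz addn0 in le_m | apply: serves_perm run'; rewrite perm_sym].
Qed.

Lemma serves_off_cost (ev : offline_alg U) s t C : uniq C -> size C <= k ->
  serves C s (off_cost k ev t C s).
Proof.
elim: s t C => [|r s IH] t C uC sC /=; first exact: serves_nil.
have /andP[uC' sC'] := step_uniq_size r (ev t C) k_gt0 uC sC.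
move: (IH t.+1 _ uC' sC'); rewrite /step.
case: ifP => rC run; first by rewrite add0n; apply: serves_hit.
case: ifP => sk in run *; first by rewrite add1n; apply: serves_load; rewrite ?rC.
have /victim_mem wC : C != [::] by apply: contraFneq sk => ->.
by rewrite add1n; apply: serves_evict run; rewrite ?rC ?wC // leqNgt sk.
Qed.

Lemma LFD_index_ge lfd I t C y : is_LFD_rule lfd -> C != [::] -> y \in C ->
  index y (drop t.+1 I) <= index (lfd I t C) (drop t.+1 I).
Proof.
move=> lfdP Cne yC; have [_] := lfdP I t C Cne; rewrite /req_after /next_req.
case: ifP => _; first by move=> zs; rewrite (memNindex zs) index_size.
by move=> /(_ y yC); rewrite leq_add2l.
Qed.

Lemma LFD_off_cost_le lfd I s t C n : is_LFD_rule lfd -> drop t I = s ->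
  uniq C -> size C <= k -> serves C s n -> off_cost k (lfd I) t C s <= n.
Proof.
move=> lfdP; elim: s t C n => [|r s IH] t C n //= dI uC sC run.
have dI' : drop t.+1 I = s by rewrite -[t.+1]addn1 addnC -drop_drop dI /= drop0.
have /andP[uC' sC'] := step_uniq_size r (lfd I t C) k_gt0 uC sC.
case/serves_consE: run => [[rC run]|[n' [-> rC [[sk run]|[full [y yC run]]]]]].
- by rewrite rC add0n; apply: (IH _ _ _ dI' uC' sC'); rewrite /step rC.
- by rewrite rC add1n ltnS; apply: (IH _ _ _ dI' uC' sC'); rewrite /step (negPf rC) sk.
have Cne : C != [::] by apply: contraTneq yC => ->.
have [zC _] := lfdP I t C Cne.
have := @LFD_index_ge lfd I t C y lfdP Cne yC; rewrite dI' => le_yz.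
have [m le_m run'] := serves_evict_later uC rC full yC zC le_yz run.
rewrite rC add1n ltnS (leq_trans _ le_m) //; apply: (IH _ _ _ dI' uC' sC').
by rewrite /step (negPf rC) ltnNge full /= zC.
Qed.

Lemma LFD_le_OPT lfd I opt : is_LFD_rule lfd -> is_OPT k I opt ->
  offline_cost k (lfd I) I <= opt.
Proof.
move=> lfdP [[ev <-] _].
by apply: LFD_off_cost_le (drop0 I) _ _ (serves_off_cost ev I 0 _ _).
Qed.

End Belady.

Section Requests.
Variables (U : eqType) (d : U) (I : seq U).
Implicit Type x : U.
Local Notation n := (size I).
Local Notation r_ j := (nth d I j).

Definition seen t x := has (fun m => r_ m == x) (iota 0 t).

(* Meaningful only when [seen t x]; otherwise 0. *)
Fixpoint prev_req t x := if t is t'.+1 then (if r_ t' == x then t' else prev_req t' x) else 0.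

Lemma seenP t x : reflect (exists2 m, m < t & r_ m = x) (seen t x).
Proof.
apply: (iffP hasP) => [[m]|[m lt_mt <-]]; last by exists m; rewrite ?mem_iota.
by rewrite mem_iota => /andP[_ lt_mt] /eqP; exists m.
Qed.

Lemma prev_reqP t x : seen t x ->
  [/\ prev_req t x < t, r_ (prev_req t x) = x & forall m, prev_req t x < m < t -> r_ m != x].
Proof.
elim: t => [|t IH] /seenP[m lt_mt rm] //=.
case: (eqVneq (r_ t) x) => [-> | ne]; first by split=> // m' /andP[lt_tm' lt_m't]; lia.
have lt_mt' : m < t by rewrite ltn_neqAle -ltnS lt_mt andbT; apply: contraNneq ne => <-; rewrite rm.
have [lt_pt rp unreq] := IH (introT (seenP _ _) (ex_intro2 _ _ m lt_mt' rm)).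
split=> [|//|m' /andP[lt_pm' lt_m't]]; first exact: ltnW.
by case: (eqVneq m' t) => [-> //|ne']; apply: unreq; rewrite lt_pm' ltn_neqAle ne' -ltnS.
Qed.

Lemma next_req_gt i t x : i <= t < n -> (forall m, i < m <= t -> r_ m != x) ->
  t < next_req I i x.
Proof.
move=> /andP[le_it lt_tn] unreq; rewrite /next_req.
suff : t - i <= index x (drop i.+1 I) by lia.
apply: (@leq_index _ d) => [|m lt_m]; first by rewrite size_drop; lia.
by rewrite nth_drop; apply: unreq; lia.
Qed.

Lemma next_req_eq i j x : i < j < n -> r_ j = x -> (forall m, i < m < j -> r_ m != x) ->
  next_req I i x = j.
Proof.
move=> /andP[lt_ij lt_jn] rj unreq; apply/eqP; rewrite eqn_leq; apply/andP; split.
  have nth_x : nth d (drop i.+1 I) (j - i.+1) = x by rewrite nth_drop subnKC.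
  have : index x (drop i.+1 I) <= j - i.+1 by rewrite -{1}nth_x index_nth // size_drop; lia.
  by rewrite /next_req; lia.
have le_j := @next_req_gt i j.-1 x; rewrite prednK ?ltnS in le_j; last by lia.
by apply: le_j => [|m lt_m]; [lia | apply: unreq; lia].
Qed.

End Requests.

Section Caches.
Variables (U : eqType) (k : nat) (d : U) (I : seq U).
Implicit Types (ev : offline_alg U) (x : U).
Local Notation n := (size I).
Local Notation r_ j := (nth d I j).

(* The cache just before request [j] is served. *)
Definition cache_at ev j := nth [::] ([::] :: trace k ev 0 [::] I) j.

Lemma nth_trace ev s t C j : j < size s ->
  nth [::] (C :: trace k ev t C s) j.+1 =
  step k (nth [::] (C :: trace k ev t C s) j) (nth d s j)
         (ev (t + j) (nth [::] (C :: trace k ev t C s) j)).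
Proof.
elim: s t C j => [|r s IH] t C [|j] //= lt_j; first by rewrite addn0.
by move: (IH t.+1 (step k C r (ev t C)) j lt_j) => /= ->; rewrite addSnnS.
Qed.

Lemma cache_atS ev j : j < n ->
  cache_at ev j.+1 = step k (cache_at ev j) (r_ j) (ev j (cache_at ev j)).
Proof. exact: nth_trace. Qed.

Lemma off_cost_count ev s t C : off_cost k ev t C s =
  count (fun j => nth d s j \notin nth [::] (C :: trace k ev t C s) j) (iota 0 (size s)).
Proof.
elim: s t C => [|r s IH] t C //=.
by rewrite IH; congr (_ + _); rewrite (iotaDl 1 0) count_map.
Qed.

Lemma offline_cost_count ev :
  offline_cost k ev I = count (fun j => r_ j \notin cache_at ev j) (iota 0 n).
Proof. exact: off_cost_count. Qed.

Lemma cache_at_uniq_size ev j : 0 < k -> j <= n ->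
  uniq (cache_at ev j) && (size (cache_at ev j) <= k).
Proof.
move=> k_gt0; elim: j => [|j IH] le_jn //; have /andP[uC sC] := IH (ltnW le_jn).
by rewrite cache_atS //; apply: step_uniq_size.
Qed.

Lemma mem_cache_at_req ev j : j < n -> r_ j \in cache_at ev j.+1.
Proof. by move=> lt_jn; rewrite cache_atS // mem_step_req. Qed.

Lemma mem_cache_atS ev j x : j < n -> x \in cache_at ev j.+1 ->
  (x \in cache_at ev j) || (x == r_ j).
Proof. by move=> lt_jn; rewrite cache_atS //; apply: mem_step. Qed.

Lemma notin_cache_at_unrequested ev a b x : a <= b <= n -> x \notin cache_at ev a ->
  (forall m, a <= m < b -> r_ m != x) -> x \notin cache_at ev b.
Proof.
elim: b => [|b IH] /andP[le_ab le_bn] xa unreq; first by move: le_ab xa; rewrite leqn0 => /eqP->.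
case: (eqVneq a b.+1) => [<- //|ne_ab].
have le_ab' : a <= b by rewrite leq_eqVlt (negPf ne_ab) in le_ab.
apply/negP => /(mem_cache_atS le_bn) /orP[].
  apply/negP; apply: IH xa _; first by rewrite le_ab' ltnW.
  by move=> m /andP[am mb]; apply: unreq; rewrite am ltnW.
by rewrite eq_sym; apply/negP; apply: unreq; rewrite le_ab' ltnSn.
Qed.

Lemma mem_cache_at_unrequested ev a b x : a <= b <= n -> x \in cache_at ev b ->
  (forall m, a <= m < b -> r_ m != x) -> x \in cache_at ev a.
Proof.
move=> le_abn xb unreq; apply: contraLR xb => xa.
exact: notin_cache_at_unrequested le_abn xa unreq.
Qed.

Lemma cache_at_precedes ev a b x y : 0 < k -> a <= b <= n ->
  (forall m, a <= m <= b -> y \in cache_at ev m) ->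
  x \in cache_at ev b -> index x (cache_at ev b) < index y (cache_at ev b) ->
  x \in cache_at ev a /\ index x (cache_at ev a) < index y (cache_at ev a).
Proof.
move=> k_gt0; elim: b => [|b IH] /andP[le_ab le_bn] ycached xb lt_xy.
  by move: le_ab xb lt_xy; rewrite leqn0 => /eqP->.
case: (eqVneq a b.+1) => [-> //|ne_ab].
have le_ab' : a <= b by rewrite leq_eqVlt (negPf ne_ab) in le_ab.
have /andP[ub _] := cache_at_uniq_size ev k_gt0 (ltnW le_bn).
have yb : y \in cache_at ev b by apply: ycached; rewrite le_ab' leqnSn.
have yb1 : y \in cache_at ev b.+1 by apply: ycached; rewrite le_ab leqnn.
move: xb yb1 lt_xy; rewrite cache_atS // => xb yb1 lt_xy.
have [xb' lt_xy'] := step_precedes ub yb xb yb1 lt_xy.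
apply: IH xb' lt_xy' => [|m /andP[am mb]]; first by rewrite le_ab' ltnW.
by apply: ycached; rewrite am (leq_trans mb).
Qed.

Lemma mem_cache_at_seen ev j x : j <= n -> x \in cache_at ev j -> seen d I j x.
Proof.
move=> le_jn; apply: contraTT => unseen.
apply: (@notin_cache_at_unrequested ev 0) => // m /andP[_ lt_mj].
by apply: contraNneq unseen => rm; apply/seenP; exists m.
Qed.

End Caches.

Section Online.
Variable U : eqType.
Implicit Types (alg : online_alg U) (I : seq U) (p : seq bool).

Definition offline_of alg I p : offline_alg U := fun t C => alg C (take t.+1 (zip I p)).

Lemma on_cost_offline k alg I p hist rest C : hist ++ rest = zip I p ->
  on_cost k alg C hist rest = off_cost k (offline_of alg I p) (size hist) C (unzip1 rest).
Proof.
elim: rest hist C => [|[r b] rest IH] hist C //= Ehist.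
have Etake : take (size hist).+1 (zip I p) = rcons hist (r, b).
  by rewrite -Ehist take_cat ltnNge leqnSn /= subSnn /= take0 cats1.
by rewrite {2}/offline_of Etake IH ?size_rcons // cat_rcons.
Qed.

Lemma ALG_offline k alg I p : size p = size I ->
  ALG k alg I p = offline_cost k (offline_of alg I p) I.
Proof. by move=> size_p; rewrite /ALG (@on_cost_offline _ _ I p [::]) //= unzip1_zip // size_p. Qed.

Definition last_pred (h : seq (U * bool)) (q : U) : bool :=
  (last (q, false) [seq x <- h | x.1 == q]).2.

(* The head of the cache is the page loaded earliest, as [step] appends. *)
Definition pred_alg (d : U) : online_alg U :=
  fun C h => head (head d C) [seq q <- C | last_pred h q].

Lemma pred_alg_mem d C h : C != [::] -> pred_alg d C h \in C.
Proof.
rewrite /pred_alg; case E: [seq q <- C | _] => [|q qs] Cne /=.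
  by case: C Cne {E} => // c C _; apply: mem_head.
have : q \in [seq q <- C | last_pred h q] by rewrite E mem_head.
by rewrite mem_filter => /andP[].
Qed.

Lemma pred_alg_pred0 d C h : last_pred h (pred_alg d C h) = false ->
  pred_alg d C h = head d C /\ {in C, forall q, last_pred h q = false}.
Proof.
rewrite /pred_alg; case E: [seq q <- C | _] => [|q qs] /=.
  split=> // q qC; apply: negbTE; apply: contraT => /negbNE pq.
  have : q \in [seq q <- C | last_pred h q] by rewrite mem_filter pq qC.
  by rewrite E.
have : q \in [seq q <- C | last_pred h q] by rewrite E mem_head.
by rewrite mem_filter => /andP[->].
Qed.

End Online.

Section Charging.
Variables (U : eqType) (k : nat) (d : U) (I : seq U) (p : seq bool).
Variable lfd : seq U -> nat -> seq U -> U.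
Hypotheses (k_gt0 : 0 < k) (size_p : size p = size I).
Local Notation n := (size I).
Local Notation r_ j := (nth d I j).
Local Notation p_ j := (nth false p j).
Local Notation A := (cache_at k I (offline_of (pred_alg d) I p)).
Local Notation L := (cache_at k I (lfd I)).
Local Notation seen := (seen d I).
Local Notation pstar := (pstar k lfd I).

Definition pred_at t q := last_pred (take t (zip I p)) q.

Lemma pred_atS t q : t < n -> pred_at t.+1 q = if r_ t == q then p_ t else pred_at t q.
Proof.
move=> lt_tn; have lt_tZ : t < size (zip I p) by rewrite size_zip size_p minnn.
rewrite /pred_at /last_pred (take_nth (d, false) lt_tZ) filter_rcons nth_zip ?size_p //=.
by case: ifP => //; rewrite last_rcons.
Qed.

Lemma pred_at_prev s t q : s < t <= n -> r_ s = q ->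
  (forall m, s < m < t -> r_ m != q) -> pred_at t q = p_ s.
Proof.
elim: t => [|t IH] // /andP[lt_st le_tn] rs unreq; rewrite pred_atS //.
case: (eqVneq t s) => [->|ne_ts]; first by rewrite rs eqxx.
have lt_st' : s < t by rewrite ltn_neqAle eq_sym ne_ts -ltnS.
rewrite (negPf (unreq t _)) ?lt_st' ?ltnSn //.
apply: IH => // [|m /andP[sm mt]]; first by rewrite lt_st' ltnW.
by apply: unreq; rewrite sm ltnW.
Qed.

Lemma pstarP i x :
  reflect (exists t, i <= t < next_req I i x /\ x \notin L t.+1) (pstar i x).
Proof.
rewrite /pstar; apply: (iffP allPn) => [[t]|[t [/andP[le_it lt_tn] xL]]].
  by rewrite mem_iota => /andP[le_it lt_tn] xL; exists t; split=> //; rewrite le_it; lia.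
by exists t => //; rewrite mem_iota le_it; lia.
Qed.

Lemma eta_count h : eta k lfd h I p =
  count (fun i => (p_ i == h) && (pstar i (r_ i) == ~~ h)) (iota 0 n).
Proof.
rewrite /eta; have -> : zip (zip (iota 0 n) I) p = [seq (i, r_ i, p_ i) | i <- iota 0 n].
  apply: (@eq_from_nth _ (0, d, false)) => [|i].
    by rewrite size_map !size_zip size_iota size_p !minnn.
  rewrite !size_zip size_iota size_p !minnn => lt_in.
  rewrite !nth_zip ?size_zip ?size_iota ?size_p ?minnn //.
  by rewrite (nth_map 0) ?size_iota // nth_iota.
by rewrite count_map.
Qed.

Definition prev_of j := prev_req d I j (r_ j).

(* [err1 j]: the request [prev_of j] is an eta_1 error.  [err0 j]: the algorithm
   faults at [j] although [prev_of j] was correctly predicted 0; these faults are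
   charged to eta_0 errors by [err0_charged]. *)
Definition err1 j := [&& seen j (r_ j), p_ (prev_of j) & ~~ pstar (prev_of j) (r_ j)].
Definition err0 j :=
  [&& seen j (r_ j), ~~ p_ (prev_of j), ~~ pstar (prev_of j) (r_ j) & r_ j \notin A j].

Lemma fault_split j : j < n -> (r_ j \notin A j) <= (r_ j \notin L j) + err1 j + err0 j.
Proof.
move=> lt_jn; have [//|rA] := boolP (r_ j \in A j).
have [rL|_ //] := boolP (r_ j \in L j).
have sj : seen j (r_ j) := mem_cache_at_seen d (ltnW lt_jn) rL.
have [lt_pj rp unreq] := prev_reqP sj; rewrite -/(prev_of j) in lt_pj rp unreq.
have nps : ~~ pstar (prev_of j) (r_ j).
  apply/pstarP => -[t [/andP[le_pt]]].
  rewrite (next_req_eq _ (erefl (r_ j)) unreq) ?lt_pj // => lt_tj.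
  apply/negP; rewrite negbK; apply: (mem_cache_at_unrequested _ rL) => [|m /andP[tm mj]].
    by rewrite lt_tj (ltnW lt_jn).
  by apply: unreq; rewrite mj (leq_ltn_trans le_pt).
by rewrite /err1 /err0 sj nps rA; case: (p_ (prev_of j)).
Qed.

Lemma err0_eviction j : j < n -> err0 j -> exists t,
  [/\ prev_of j < t < j, r_ j \in A t, r_ j \notin A t.+1, r_ j \in L t.+1
    & pred_at t.+1 (r_ j) = false].
Proof.
move=> lt_jn /and4P[sj np nps rA].
have [lt_pj rp unreq] := prev_reqP sj; rewrite -/(prev_of j) in lt_pj rp unreq.
have rAp : r_ j \in A (prev_of j).+1 by rewrite -{1}rp mem_cache_at_req //; apply: ltn_trans lt_jn.
have [t [/andP[lt_pt lt_tj] rAt rAt1]] := exists_boundary (P := fun m => r_ j \in A m) lt_pj rAp rA.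
exists t; split; rewrite ?lt_pt ?lt_tj //.
  apply: contraNT nps => rL; apply/pstarP; exists t; split=> //.
  by rewrite (ltnW lt_pt) (next_req_eq _ (erefl (r_ j)) unreq) ?lt_pj.
have le_tn : t.+1 <= n by apply: leq_trans lt_tj (ltnW lt_jn).
rewrite (pred_at_prev _ rp) ?(negbTE np) ?(leqW lt_pt) ?le_tn //.
by move=> m /andP[pm mt]; apply: unreq; rewrite pm (leq_trans mt).
Qed.

Lemma pred0_eviction_witness t r : t < n -> r \in A t -> r \notin A t.+1 ->
  r \in L t.+1 -> pred_at t.+1 r = false ->
  exists e, [/\ e \in A t, e \notin L t.+1, e != r_ t, index r (A t) < index e (A t)
             & pred_at t.+1 e = false].
Proof.
move=> lt_tn rAt rAt1 rL predr.
have Ane : A t != [::] by apply: contraTneq rAt => ->.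
move: rAt1; rewrite (@cache_atS _ _ d) // => /(step_evicted rAt)[rtA full].
rewrite /offline_of pred_alg_mem // => victim.
have [head_r pred0] := pred_alg_pred0 (etrans (congr1 _ (esym victim)) predr).
have /andP[uA sA] := cache_at_uniq_size d (offline_of (pred_alg d) I p) k_gt0 (ltnW lt_tn).
have /andP[_ sL] := cache_at_uniq_size d (lfd I) k_gt0 lt_tn.
have rtL := mem_cache_at_req k d (lfd I) lt_tn.
have [e eA eL] := exists_mem_notin uA rtA rtL (leq_trans sL full).
exists e; split=> //; last exact: pred0.
  by apply: contraNneq rtA => <-.
have : e != r by apply: contraNneq eL => ->.
rewrite victim head_r; case: (A t) eA => [|c C] //= _ ec.
by rewrite eqxx eq_sym (negPf ec).
Qed.

(* The fault at [j] is charged to [s]: the page [r_ j] stayed cached from [s + 1]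
   until the algorithm evicted it, after [prev_of j]. *)
Definition charged j s := exists t,
  [/\ prev_of j < t < j, s < t, r_ j \notin A t.+1 & forall m, s < m <= t -> r_ j \in A m].

Lemma err0_charged j : j < n -> err0 j -> exists s,
  [/\ s < n, ~~ p_ s, pstar s (r_ s), charged j s & index (r_ j) (A s.+1) < k.-1].
Proof.
move=> lt_jn err0j; have [t [/andP[lt_pt lt_tj] rAt rAt1 rL predr]] := err0_eviction lt_jn err0j.
have lt_tn : t < n by apply: ltn_trans lt_jn.
have [e [eA eL ert lt_re prede]] := pred0_eviction_witness lt_tn rAt rAt1 rL predr.
have [] := prev_reqP (mem_cache_at_seen d (ltnW lt_tn) eA).
move: (prev_req d I t e) => s lt_st rs unreq.
have unreq' m : s < m <= t -> r_ m != e.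
  case/andP=> sm; rewrite leq_eqVlt => /orP[/eqP->|mt]; first by rewrite eq_sym.
  by apply: unreq; rewrite sm.
have eAm m : s < m <= t -> e \in A m.
  move=> /andP[sm mt]; apply: (mem_cache_at_unrequested _ eA) => [|m' /andP[mm' m't]].
    by rewrite mt (ltnW lt_tn).
  by apply: unreq; rewrite m't (leq_trans sm).
have precedes m : s < m <= t -> r_ j \in A m /\ index (r_ j) (A m) < index e (A m).
  move=> /andP[sm mt]; apply: (cache_at_precedes d k_gt0 _ _ rAt lt_re).
    by rewrite mt (ltnW lt_tn).
  by move=> m' /andP[mm' m't]; apply: eAm; rewrite m't (leq_trans sm).
have ps : pred_at t.+1 e = p_ s.
  apply: pred_at_prev rs _ => [|m /andP[sm mt]]; first by rewrite (leqW lt_st) lt_tn.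
  by apply: unreq'; rewrite sm.
exists s; split.
- exact: ltn_trans lt_tn.
- by rewrite -ps prede.
- apply/pstarP; exists t; split; last by rewrite rs.
  by rewrite (ltnW lt_st) rs /=; apply: (@next_req_gt _ d); rewrite ?(ltnW lt_st).
- by exists t; split; rewrite ?lt_pt ?lt_tj //; move=> m /precedes[].
have /precedes[_ lt_re1] : s < s.+1 <= t by rewrite leqnn.
have /andP[_ sA1] :=
  cache_at_uniq_size d (offline_of (pred_alg d) I p) k_gt0 (leq_trans lt_st (ltnW lt_tn)).
have eA1 : index e (A s.+1) < size (A s.+1) by rewrite index_mem eAm ?leqnn.
move: lt_re1 eA1 sA1; clear; lia.
Qed.

Lemma prev_of_inj j1 j2 : seen j1 (r_ j1) -> seen j2 (r_ j2) ->
  prev_of j1 = prev_of j2 -> j1 = j2.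
Proof.
wlog lt_12 : j1 j2 / j1 < j2 => [wlog_lt s1 s2 eq_pv|s1 s2 eq_pv].
  by case: (ltngtP j1 j2) => [lt|lt|//]; [apply: wlog_lt | apply/esym/wlog_lt].
have [lt_p1 rp1 _] := prev_reqP s1; have [_ rp2 unreq2] := prev_reqP s2.
have := unreq2 j1; rewrite -/(prev_of j2) -eq_pv lt_p1 lt_12 -rp1 -/(prev_of j1) eq_pv rp2 eqxx.
by move/(_ isT).
Qed.

Lemma charged_inj j1 j2 s : seen j1 (r_ j1) -> seen j2 (r_ j2) -> r_ j1 = r_ j2 ->
  charged j1 s -> charged j2 s -> j1 = j2.
Proof.
wlog lt_12 : j1 j2 / j1 < j2 => [wlog_lt s1 s2 eq_r c1 c2|_ s2 eq_r].
  by case: (ltngtP j1 j2) => [lt|lt|//]; [apply: wlog_lt | apply/esym/wlog_lt].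
move=> [t1 [/andP[_ lt_t1j1] lt_st1 rA1 _]] [t2 [/andP[lt_pt2 _] _ _ cached2]].
have [_ _ unreq2] := prev_reqP s2.
have le_j1p : j1 <= prev_of j2.
  rewrite leqNgt; apply/negP => lt_pj1.
  by move: (unreq2 j1); rewrite lt_pj1 lt_12 eq_r eqxx => /(_ isT).
have le_t12 : t1.+1 <= t2 by apply: leq_trans lt_t1j1 (ltnW (leq_ltn_trans le_j1p lt_pt2)).
have : r_ j1 \in A t1.+1 by rewrite eq_r; apply: cached2; rewrite (leqW lt_st1) le_t12.
by rewrite (negPf rA1).
Qed.

Lemma count_err1 : count err1 (iota 0 n) <= eta k lfd true I p.
Proof.
rewrite eta_count -[X in _ <= X]size_filter.
apply: (@count_le_size_rel _ _ err1 (fun j i => i = prev_of j)) => [|j|j1 j2 i].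
- exact: iota_uniq.
- rewrite mem_iota => /andP[_ lt_jn] /and3P[sj pj npj].
  have [lt_pj rp _] := prev_reqP sj; rewrite -/(prev_of j) in lt_pj rp.
  by exists (prev_of j); rewrite // mem_filter pj rp (negPf npj) mem_iota (ltn_trans lt_pj).
- by move=> _ _ /and3P[s1 _ _] /and3P[s2 _ _] -> /(prev_of_inj s1 s2).
Qed.

Lemma count_err0 : count err0 (iota 0 n) <= (k - 1) * eta k lfd false I p.
Proof.
rewrite eta_count mulnC subn1 -[X in _ <= X * _]size_filter -(size_iota 0 k.-1).
rewrite -(size_allpairs pair).
apply: (@count_le_size_rel _ _ err0 (fun j c => charged j c.1 /\ c.2 = index (r_ j) (A c.1.+1)))
  => [|j|j1 j2 [s i]].
- exact: iota_uniq.
- rewrite mem_iota => /andP[_ lt_jn] err0j.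
  have [s [lt_sn ps pss cj lt_idx]] := err0_charged lt_jn err0j.
  exists (s, index (r_ j) (A s.+1)) => //; apply/allpairsP; exists (s, index (r_ j) (A s.+1)).
  by rewrite mem_filter mem_iota (negPf ps) pss lt_sn mem_iota lt_idx.
- move=> _ _ /and4P[s1 _ _ _] /and4P[s2 _ _ _] /= [c1 i1] [c2 i2].
  have cached j : charged j s -> r_ j \in A s.+1.
    by case=> t [_ lt_st _ cachedj]; apply: cachedj; rewrite leqnn lt_st.
  apply: (charged_inj s1 s2 _ c1 c2).
  by rewrite -(nth_index d (cached _ c1)) -(nth_index d (cached _ c2)) -i1 -i2.
Qed.

Lemma ALG_le_LFD : ALG k (pred_alg d) I p <=
  offline_cost k (lfd I) I + (k - 1) * eta k lfd false I p + eta k lfd true I p.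
Proof.
rewrite ALG_offline // !(@offline_cost_count _ _ d).
apply: leq_trans (count_le_sum3 (c := err1) (d := err0) _) _.
  by move=> j; rewrite mem_iota => /andP[_]; apply: fault_split.
by rewrite -!addnA leq_add2l addnC leq_add ?count_err0 ?count_err1.
Qed.

End Charging.

Theorem theorem1 (U : eqType) (k : nat) :
  1 <= k ->
  forall lfd : seq U -> nat -> seq U -> U, is_LFD_rule lfd ->
  exists (alg : online_alg U) (b : nat),
    forall (I : seq U) (p : seq bool), size p = size I ->
    forall opt : nat, is_OPT k I opt ->
      ALG k alg I p <= opt + (k - 1) * eta k lfd false I p + eta k lfd true I p + b.
Proof.
move=> k_gt0 lfd lfdP.
exists (pred_alg (lfd [::] 0 [::])), 0 => I p size_p opt optP.
rewrite addn0; apply: leq_trans (ALG_le_LFD _ lfd k_gt0 size_p) _.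
by rewrite !leq_add2r (LFD_le_OPT k_gt0 lfdP optP).
Qed.
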